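(* Let $k$ be a field of characteristic zero and let $P=\langle f_1,\ldots,f_m\rangle\subseteq k[x_1,\ldots,x_n]$ be a prime ideal. Let $V=\mathcal{V}(P)$ be the corresponding affine variety, of dimension $d$. Let $\mathcal{J}(P)=\left(\partial f_i/\partial x_j\right)_{1\le i\le m,\,1\le j\le n}$ be the Jacobian matrix. Assume that $\mathcal{J}(P)$ represents the dual of the algebraic matroid $\mathcal{M}(P)$, where the column matroid is taken over $\operatorname{Frac}(k[x_1,\ldots,x_n]/P)$ and the ground set is $E=\{1,\ldots,n\}$. Then the non-matroidal locus $\mathcal{NM}(P)$ is the set of points of $V$ at which the ideal \[ I=\bigcap_{B\in\mathcal{B}(\mathcal{M}(P))} I_{n-d}\big(\mathcal{J}(P)\{E\setminus B\}\big) \] vanishes; that is, $\mathcal{NM}(P)=\mathcal{V}(P)\cap\mathcal{V}(I)$. Equivalently, $I$ may be replaced by the intersection of $I_{n-d}(\mathcal{J}(P)\{S\})$ over all subsets $S\subseteq E$ with $I_{n-d}(\mathcal{J}(P)\{S\})\not\subseteq P$. In the special case where $\mathcal{J}(P)$ has exactly $n-d$ rows, this ideal is principal and is generated by the least common multiple of all maximal minors of $\mathcal{J}(P)$ that are nonzero modulo $P$.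
   Context: For a prime ideal $P\subseteq k[x_1,\ldots,x_n]$, let $K=\operatorname{Frac}(k[x_1,\ldots,x_n]/P)$ and let $\overline{x_i}$ be the image of $x_i$ in $K$. The algebraic matroid $\mathcal{M}(P)$ has ground set $\{\overline{x_1},\ldots,\overline{x_n}\}$, identified with $E=\{1,\ldots,n\}$. A subset of the ground set is independent if and only if it is algebraically independent over $k$. The matroid $\mathcal{M}(P)$ has rank $d=\dim \mathcal{V}(P)$, and $\mathcal{B}(\mathcal{M}(P))$ denotes its set of bases. For a matrix $M$, $I_r(M)$ is the ideal generated by the $r\times r$ minors of $M$; by convention this ideal is $0$ if $M$ has fewer than $r$ columns. For $S\subseteq E$, $M\{S\}$ is the submatrix of $M$ consisting of the columns indexed by $S$. The non-matroidal locus $\mathcal{NM}(P)$ is the set of points $p\in\mathcal{V}(P)$ at which the specialized matrix $\mathcal{J}(P)(p)$ does not represent the dual of $\mathcal{M}(P)$. Here $\mathcal{J}(P)(p)$ has entries in $k$ and its column matroid is taken over $k$. *)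

From HB Require Import structures.
From mathcomp Require Import all_boot all_order all_algebra.
From mathcomp Require Import ring_quotient generic_quotient fraction.
From mathcomp Require Import mpoly.
From Stdlib Require Import ClassicalEpsilon.

Set Implicit Arguments.
Unset Strict Implicit.
Unset Printing Implicit Defensive.

Import GRing.Theory.
Local Open Scope ring_scope.
Local Open Scope quotient_scope.

Section QuotIdomain.
Variables (R : comNzRingType) (P : prime_idealr R).

Definition quotP := {ideal_quot P}.
HB.instance Definition _ := GRing.ComNzRing.on quotP.

Definition quot_unit : {pred quotP} :=
  fun x => if excluded_middle_informative (exists y : quotP, y * x = 1)
           then true else false.

Definition quot_inv (x : quotP) : quotP :=
  match excluded_middle_informative (exists y : quotP, y * x = 1) with
  | left h => proj1_sig (constructive_indefinite_description _ h)
  | right _ => x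
  end.

Lemma quot_mulVx : {in quot_unit, left_inverse 1 quot_inv *%R}.
Proof.
move=> x; rewrite /quot_unit /quot_inv /in_mem /=.
case: excluded_middle_informative => // h _.
by case: constructive_indefinite_description.
Qed.

Lemma quot_unitPl : forall x y : quotP, y * x = 1 -> quot_unit x.
Proof.
move=> x y hxy; rewrite /quot_unit.
by case: excluded_middle_informative => // -[]; exists y.
Qed.

Lemma quot_invr_out : {in [predC quot_unit], quot_inv =1 id}.
Proof.
move=> x; rewrite /in_mem /= /quot_unit /quot_inv.
by case: excluded_middle_informative.
Qed.

HB.instance Definition _ := GRing.ComNzRing_hasMulInverse.Build quotP
  quot_mulVx quot_unitPl quot_invr_out.

HB.instance Definition _ :=
  GRing.ComUnitRing_isIntegral.Build quotP (@Quotient.rquot_IdomainAxiom R P).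

Definition fracQ : fieldType := {fraction quotP}.

Definition toFrac (g : R) : fracQ := @FracField.tofrac quotP (\pi_(quotP) g).

End QuotIdomain.

(* strictly increasing maps 'I_r -> 'I_m (choice of r rows / columns) *)
Definition increasing (r m : nat) (f : {ffun 'I_r -> 'I_m}) : bool :=
  [forall i : 'I_r, forall j : 'I_r, (i < j)%N ==> (f i < f j)%N].

Definition minor (R : comNzRingType) (m c r : nat) (A : 'M[R]_(m, c))
  (f : {ffun 'I_r -> 'I_m}) (g : {ffun 'I_r -> 'I_c}) : R :=
  \det (\matrix_(i < r, j < r) A (f i) (g j)).

(* I_r(A): the ideal generated by the r x r minors of A (it is 0 when A
   has fewer than r columns or rows, since there are then no minors). *)
Definition minor_ideal (R : comNzRingType) (m c r : nat) (A : 'M[R]_(m, c))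
  (h : R) : Prop :=
  exists coef : {ffun 'I_r -> 'I_m} -> {ffun 'I_r -> 'I_c} -> R,
    h = \sum_(f | increasing f) \sum_(g | increasing g) coef f g * minor A f g.

Definition colsubset (R : Type) (m n : nat) (A : 'M[R]_(m, n))
  (S : {set 'I_n}) : 'M[R]_(m, #|S|) :=
  \matrix_(i < m, j < #|S|) A i (enum_val j).

Definition gen_ideal (R : comNzRingType) (m : nat) (F : 'I_m -> R) (h : R)
  : Prop := exists c : 'I_m -> R, h = \sum_(i < m) c i * F i.

Definition rdvd (R : comNzRingType) (a b : R) : Prop := exists q, b = q * a.

Definition is_basis (n : nat) (indep : {set 'I_n} -> Prop) (B : {set 'I_n})
  : Prop := indep B /\ forall T : {set 'I_n}, B \proper T -> ~ indep T.

Definition dual_indep (n : nat) (indep : {set 'I_n} -> Prop) (S : {set 'I_n})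
  : Prop := exists B, is_basis indep B /\ S \subset ~: B.

Definition col_indep (F : fieldType) (m n : nat) (A : 'M[F]_(m, n))
  (S : {set 'I_n}) : Prop := \rank (colsubset A S) = #|S|.

Definition represents (F : fieldType) (m n : nat) (A : 'M[F]_(m, n))
  (indep : {set 'I_n} -> Prop) : Prop :=
  forall S, col_indep A S <-> indep S.

Section Poly.
Variables (k : fieldType) (n : nat).

Definition vanishes (S : {mpoly k[n]} -> Prop) (p : 'I_n -> k) : Prop :=
  forall g, S g -> g.@[p] = 0.

Definition jacobian (m : nat) (f : 'I_m -> {mpoly k[n]})
  : 'M[{mpoly k[n]}]_(m, n) :=
  \matrix_(i < m, j < n) mderiv j (f i).

Definition eval_mx (m c : nat) (A : 'M[{mpoly k[n]}]_(m, c)) (p : 'I_n -> k)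
  : 'M[k]_(m, c) := \matrix_(i, j) (A i j).@[p].

Variable P : prime_idealr {mpoly k[n]}.

Definition frac_mx (m c : nat) (A : 'M[{mpoly k[n]}]_(m, c))
  : 'M[fracQ P]_(m, c) := \matrix_(i, j) toFrac P (A i j).

Definition xbar (i : 'I_n) : fracQ P := toFrac P 'X_i.

Definition vars_in (g : {mpoly k[n]}) (S : {set 'I_n}) : Prop :=
  forall mo, mo \in msupp g -> forall i, (mo i != 0)%N -> i \in S.

Definition alg_indep (S : {set 'I_n}) : Prop :=
  forall g : {mpoly k[n]}, vars_in g S -> g != 0 ->
    mmap (fun c : k => toFrac P c%:MP) xbar g != 0.

End Poly.

Definition maxminor (R : comNzRingType) (m c : nat) (A : 'M[R]_(m, c))
  (g : {ffun 'I_m -> 'I_c}) : R :=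
  \det (\matrix_(i < m, j < m) A i (g j)).

(* Over K = Frac(k[x]/P) the columns of J outside a basis B of M(P) are
   independent, so some (n - d)-minor of J{E \ B} is nonzero modulo P.
   Specializing at a point p of V(P) can only destroy independence (a minor
   that does not vanish at p is nonzero modulo P), so J(p) represents the dual
   matroid exactly when, for every basis B, some (n - d)-minor of J{E \ B} does
   not vanish at p.  The product of one such minor per basis lies in I and does
   not vanish at p, whence NM(P) = V(P) ∩ V(I); the sets S with
   I_{n-d}(J{S}) ⊄ P are handled the same way.  When J has n - d rows, its
   (n - d)-minors with columns in S are maximal minors, so both ideals consist
   of the common multiples of the maximal minors not in P.  As k[x] is
   factorial (Gauss's lemma and induction on n), these minors have a least
   common multiple, which generates both ideals. *)

From Pilot Require Import Defs.
From HB Require Import structures.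
From mathcomp Require Import all_boot all_order all_algebra.
From mathcomp Require Import ring_quotient generic_quotient fraction.
From mathcomp Require Import mpoly.
From mathcomp Require Import boolp.
From mathcomp Require Import ring zify.

Set Implicit Arguments.
Unset Strict Implicit.
Unset Printing Implicit Defensive.

Import GRing.Theory.
Local Open Scope ring_scope.

(** * Divisibility and factorial domains *)

Section RdvdRing.
Variable R : comNzRingType.
Implicit Types a b c : R.

Lemma rdvdxx a : rdvd a a.
Proof. by exists 1; rewrite mul1r. Qed.

Lemma rdvd_trans a b c : rdvd a b -> rdvd b c -> rdvd a c.
Proof. by move=> [x ->] [y ->]; exists (y * x); rewrite mulrA. Qed.

Lemma rdvd_mull a b c : rdvd a b -> rdvd a (c * b).
Proof. by move=> [x ->]; exists (c * x); rewrite mulrA. Qed.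

Lemma rdvd_mulr a b c : rdvd a b -> rdvd a (b * c).
Proof. by rewrite mulrC; apply: rdvd_mull. Qed.

Lemma rdvd_mul2l c a b : rdvd a b -> rdvd (c * a) (c * b).
Proof. by move=> [x ->]; exists x; rewrite mulrCA. Qed.

Lemma rdvd0 a : rdvd a 0.
Proof. by exists 0; rewrite mul0r. Qed.

Lemma rdvd1l a : rdvd 1 a.
Proof. by exists a; rewrite mulr1. Qed.

Lemma rdvdD a b c : rdvd a b -> rdvd a c -> rdvd a (b + c).
Proof. by move=> [x ->] [y ->]; exists (x + y); rewrite mulrDl. Qed.

Lemma rdvdB a b c : rdvd a b -> rdvd a c -> rdvd a (b - c).
Proof. by move=> [x ->] [y ->]; exists (x - y); rewrite mulrBl. Qed.

Lemma rdvd_sum (I : Type) (r : seq I) (P : pred I) (F : I -> R) a :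
  (forall i, P i -> rdvd a (F i)) -> rdvd a (\sum_(i <- r | P i) F i).
Proof.
move=> aF; elim/big_rec: _ => [|i x Pi ax]; first exact: rdvd0.
exact: rdvdD (aF _ Pi) ax.
Qed.

End RdvdRing.

Lemma rdvd_unit (R : comUnitRingType) (u a : R) : u \is a GRing.unit -> rdvd u a.
Proof. by move=> uU; exists (a / u); rewrite mulrVK. Qed.

Section RdvdIdomain.
Variable R : idomainType.
Implicit Types a b c : R.

Lemma rdvd_mul2l_cancel c a b : c != 0 -> rdvd (c * a) (c * b) -> rdvd a b.
Proof. by move=> c0 [x]; rewrite mulrCA => /(mulfI c0) ->; exists x. Qed.

End RdvdIdomain.

Section FactorialDomain.
Variable R : idomainType.
Implicit Types a b p q u v w x : R.

Definition prime_elem p := [/\ p != 0, p \isn't a GRing.unit &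
  forall a b, rdvd p (a * b) -> rdvd p a \/ rdvd p b].

Definition factorization_len a k := exists u (s : seq R),
  [/\ u \is a GRing.unit, {in s, forall q, prime_elem q}, size s = k &
      a = u * \prod_(q <- s) q].

Definition factorization a := exists k, factorization_len a k.

Definition factorial_domain := forall a, a != 0 -> factorization a.

Lemma factorization_unit u : u \is a GRing.unit -> factorization u.
Proof. by move=> uU; exists 0%N, u, [::]; split; rewrite ?big_nil ?mulr1. Qed.

Lemma factorization_prime p : prime_elem p -> factorization p.
Proof.
move=> pP; exists 1%N, 1, [:: p]; split; rewrite ?unitr1 ?big_seq1 ?mul1r //.
by move=> q; rewrite inE => /eqP ->.
Qed.

Lemma factorizationM a b :
  factorization a -> factorization b -> factorization (a * b).
Proof.
move=> [_ [u [s [uU sP _ ->]]]] [_ [v [t [vU tP _ ->]]]].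
exists (size (s ++ t)), (u * v), (s ++ t); split; rewrite ?unitrM ?uU //.
  by move=> q; rewrite mem_cat => /orP[/sP|/tP].
by rewrite big_cat /=; ring.
Qed.

Lemma factorial_ind (Q : R -> Prop) : factorial_domain ->
    (forall u, u \is a GRing.unit -> Q u) ->
    (forall p a, prime_elem p -> Q a -> Q (p * a)) ->
  forall a, a != 0 -> Q a.
Proof.
move=> Rfact Qunit QM a /Rfact [_ [u [s [uU sP _ ->]]]].
elim: s sP => [|p s IHs] sP; first by rewrite big_nil mulr1; apply: Qunit.
rewrite big_cons mulrCA; apply: QM; first exact: sP (mem_head _ _).
by apply: IHs => q qs; apply: sP; rewrite inE qs orbT.
Qed.

Lemma prime_elem_cofactor_unit q p w : prime_elem q ->
  p \isn't a GRing.unit -> q = w * p -> w \is a GRing.unit.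
Proof.
move=> [q0 _ qP] pNU qE.
have q_wp : rdvd q (w * p) by rewrite -qE; apply: rdvdxx.
have [[z wE]|[z pE]] := qP _ _ q_wp.
  case/negP: pNU; apply/unitrPr; exists z; rewrite mulrC.
  by apply: (mulIf q0); rewrite mul1r [in RHS]qE wE; ring.
apply/unitrPr; exists z.
by apply: (mulIf q0); rewrite mul1r [in RHS]qE pE; ring.
Qed.

Lemma factorization_len_prime_div p a k : prime_elem p ->
  factorization_len (p * a) k -> exists2 k', (k' < k)%N & factorization_len a k'.
Proof.
move=> pP [u [s [uU sP <-{k} paE]]]; have [p0 pNU pdiv] := pP.
elim: s a sP paE => [|q s IHs] a sP paE.
  case/negP: pNU; apply/unitrPr; exists (a / u).
  by rewrite mulrA paE big_nil mulr1 mulrV.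
have qP : prime_elem q := sP q (mem_head _ _).
have {}sP : {in s, forall q, prime_elem q}.
  by move=> r rs; apply: sP; rewrite inE rs orbT.
move: paE; rewrite big_cons mulrCA => paE.
have : rdvd p (q * (u * \prod_(r <- s) r)) by rewrite -paE; apply: rdvd_mulr (rdvdxx p).
case/pdiv => [[w qE]|[b bE]].
  have wU := prime_elem_cofactor_unit qP pNU qE.
  exists (size s) => //; exists (w * u), s; split; rewrite ?unitrM ?wU //.
  by apply: (mulfI p0); rewrite paE qE; ring.
have [k' k's [v [t [vU tP tk bE']]]] := IHs b sP (etrans (mulrC _ _) (esym bE)).
exists k'.+1 => //; exists v, (q :: t); split; rewrite /= ?tk //.
  by move=> r; rewrite inE => /orP[/eqP ->|/tP].
by apply: (mulfI p0); rewrite paE bE bE' big_cons; ring.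
Qed.

Lemma Gauss_rdvd_prime p b x : factorial_domain -> prime_elem p -> b != 0 ->
  ~ rdvd p b -> rdvd b (p * x) -> rdvd b x.
Proof.
move=> Rfact pP b0; move: b b0 x.
apply: (factorial_ind Rfact) => [u uU x _ _|q b [q0 qNU qdiv] IHb x pNqb qb_px].
  exact: rdvd_unit.
have : rdvd q (p * x) by apply: rdvd_trans qb_px; apply: rdvd_mulr (rdvdxx q).
case/qdiv => [[w pE]|[x' xE]]; last rewrite {x}xE in qb_px *.
  case: pNqb; have wU := prime_elem_cofactor_unit pP qNU pE.
  exists (w^-1 * b); rewrite pE.
  by rewrite mulrACA mulVr // mul1r mulrC.
rewrite [x' * q]mulrC; apply: rdvd_mul2l; apply: IHb.
  by move=> pb; apply: pNqb; apply: rdvd_mull.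
apply: (rdvd_mul2l_cancel q0).
by have -> : q * (p * x') = p * (x' * q) by ring.
Qed.

Lemma lcm2_exists a b : factorial_domain -> a != 0 -> b != 0 ->
  exists h, [/\ h != 0, rdvd a h, rdvd b h &
                forall q, rdvd a q -> rdvd b q -> rdvd h q].
Proof.
move=> Rfact a0; move: a a0 b; apply: (factorial_ind Rfact).
  by move=> u uU b b0; exists b; split=> //; [exact: rdvd_unit | exact: rdvdxx].
move=> p a pP IHa b b0; have [p0 _ _] := pP.
(* [b'] is [b / p] when [p] divides [b], and [b] itself otherwise. *)
have [b' [b'0 b_pb' b'P]] : exists b', [/\ b' != 0, rdvd b (p * b') &
    forall x, rdvd b (p * x) -> rdvd b' x].
  have [[b' bE]|pNb] := EM (rdvd p b).
    exists b'; rewrite bE mulrC; split.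
    - by apply: contraNneq b0 => b'0; rewrite bE b'0 mul0r.
    - exact: rdvdxx.
    - by move=> x; apply: rdvd_mul2l_cancel.
  exists b; split=> //; first exact: rdvd_mull (rdvdxx b).
  by move=> x; apply: Gauss_rdvd_prime.
have [h [h0 ah b'h hP]] := IHa b' b'0.
exists (p * h); split; first by rewrite mulf_neq0.
- exact: rdvd_mul2l.
- exact: rdvd_trans b_pb' (rdvd_mul2l p b'h).
move=> q paq bq; have [q' qE] : rdvd p q by apply: rdvd_trans paq; apply: rdvd_mulr (rdvdxx p).
rewrite qE [q' * p]mulrC in paq bq *; apply: rdvd_mul2l; apply: hP; last exact: b'P.
exact: rdvd_mul2l_cancel paq.
Qed.

Definition is_lcm_seq (s : seq R) h :=
  {in s, forall a, rdvd a h} /\ forall q, {in s, forall a, rdvd a q} -> rdvd h q.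

Lemma lcm_seq_exists (s : seq R) : factorial_domain ->
  {in s, forall a, a != 0} -> exists h, is_lcm_seq s h.
Proof.
move=> Rfact; suff : {in s, forall a, a != 0} -> exists h, h != 0 /\ is_lcm_seq s h.
  by move=> hs /hs [h [_ ?]]; exists h.
elim: s => [|a s IHs] s0.
  by exists 1; split; rewrite ?oner_neq0 //; split=> // q _; apply: rdvd1l.
have [b bs|h [h0 [sh hP]]] := IHs; first by apply: s0; rewrite inE bs orbT.
have [g [g0 ag hg gP]] := lcm2_exists Rfact (s0 a (mem_head _ _)) h0.
exists g; split=> //; split.
  by move=> b; rewrite inE => /orP[/eqP ->//|/sh bh]; apply: rdvd_trans bh hg.
move=> q sq; apply: gP; first by apply: sq; rewrite mem_head.
by apply: hP => b bs; apply: sq; rewrite inE bs orbT.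
Qed.

End FactorialDomain.

(** * Gauss's lemma *)

Definition poly_indecomposable (R : nzRingType) (f : {poly R}) :=
  forall g h, f = g * h -> (size g <= 1)%N \/ (size h <= 1)%N.

Lemma irredp_dvdp_mul (K : fieldType) (f g h : {poly K}) :
  irreducible_poly f -> f %| g * h -> (f %| g) || (f %| h).
Proof.
move=> f_irr fgh; have [fg|fNg] := boolP (coprimep f g).
  by rewrite -(Gauss_dvdpr h fg) fgh orbT.
have /f_irr /(_ (dvdp_gcdl f g)) : size (gcdp f g) != 1 by rewrite -coprimep_def.
by move/eqp_dvdl <-; rewrite dvdp_gcdr.
Qed.

Lemma tofrac_clear_denom (R : idomainType) (x : {fraction R}) :
  exists a b, b != 0 /\ x * tofrac b = tofrac a.
Proof.
elim/quotW: x => r; exists \n_r, \d_r; split; first exact: denom_ratioP.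
unlock tofrac; rewrite !piE; apply/eqmodP => /=.
rewrite FracField.equivfE /FracField.mulf /= !numden_Ratio ?oner_neq0 ?mulf_neq0 //.
  by rewrite !mulr1 mulrC.
all: by rewrite ?oner_neq0 ?denom_ratioP.
Qed.

Section GaussLemma.
Variable R : idomainType.
Local Notation K := {fraction R}.
Local Notation tf := (@tofrac R).
Local Notation toK := (map_poly tf).
Implicit Types f g h : {poly R}.

Lemma tofrac_inj : injective tf.
Proof. by move=> x y /eqP; rewrite tofrac_eq => /eqP. Qed.

Lemma toK_inj : injective toK.
Proof. exact: (map_inj_poly tofrac_inj (rmorph0 _)). Qed.

Lemma size_toK f : size (toK f) = size f.
Proof. exact: (size_map_inj_poly tofrac_inj (rmorph0 _)). Qed.

(* Stated for [map_poly tofrac] itself: rewriting with the generic morphism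
   lemmas would leave [tofrac] behind a structure projection that [rewrite]
   no longer matches. *)
Lemma toKD f g : toK (f + g) = toK f + toK g. Proof. exact: rmorphD. Qed.
Lemma toKM f g : toK (f * g) = toK f * toK g. Proof. exact: rmorphM. Qed.
Lemma toKC c : toK c%:P = (tf c)%:P. Proof. exact: map_polyC. Qed.

Lemma poly_clear_denom (F : {poly K}) : exists r f, r != 0 /\ toK f = (tf r)%:P * F.
Proof.
elim/poly_ind: F => [|F c [r [f [r0 fE]]]].
  by exists 1, 0; rewrite oner_neq0 mulr0 rmorph0.
have [a [b [b0 cE]]] := tofrac_clear_denom c.
exists (r * b), (b%:P * f * 'X + (r * a)%:P); split; first by rewrite mulf_neq0.
by rewrite toKD !toKM !toKC map_polyX fE tofracM -cE; ring.
Qed.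

Lemma rdvd_polyC c f : rdvd c%:P f <-> forall i, rdvd c f`_i.
Proof.
split=> [[q ->] i|/choice [q qE]]; first by exists q`_i; rewrite coefMC.
exists (\poly_(i < size f) q i); apply/polyP => i.
rewrite coefMC coef_poly; case: ltnP => [_|fi]; first exact: qE.
by rewrite mul0r nth_default.
Qed.

Lemma polyC_first_coef_not_rdvd c f : ~ rdvd c%:P f ->
  exists i, ~ rdvd c f`_i /\ forall j, (j < i)%N -> rdvd c f`_j.
Proof.
move=> cNf; have /existsNP [i0 ci0] : ~ forall i, rdvd c f`_i by move/rdvd_polyC.
have ex : exists i, ~~ `[< rdvd c f`_i >] by exists i0; apply/asboolPn.
have [i /asboolPn ci imin] := ex_minnP ex; exists i; split=> // j ji.
apply: contrapT => cj; have := imin j (introT (asboolPn _) cj).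
by rewrite leqNgt ji.
Qed.

(* If [i] and [j] index the first coefficients of [g] and [h] not divisible
   by [p], then coefficient [i + j] of [g * h] is [g_i h_j] plus a multiple of
   [p]. *)
Lemma prime_elem_polyC (p : R) : prime_elem p -> prime_elem p%:P.
Proof.
move=> [p0 pNU pdiv]; split; first by rewrite polyC_eq0.
  by rewrite poly_unitE size_polyC p0 coefC eqxx.
move=> g h pgh; apply: contrapT => /not_orP [/polyC_first_coef_not_rdvd [i [gi gmin]]
                                              /polyC_first_coef_not_rdvd [j [hj hmin]]].
suff : rdvd p (g`_i * h`_j) by case/pdiv.
have ij : (i < (i + j).+1)%N by rewrite ltnS leq_addr.
have := proj1 (rdvd_polyC p (g * h)) pgh (i + j)%N.
rewrite coefM (bigD1 (Ordinal ij)) //= addKn.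
set S := \sum_(l < _ | _) _ => pS.
have pRest : rdvd p S.
  apply: rdvd_sum => l lNi; case: (ltngtP l i) => [li|il|li].
  - exact: rdvd_mulr (gmin _ li).
  - by apply: rdvd_mull; apply: hmin; have := ltn_ord l; lia.
  - by case/eqP: lNi; apply: val_inj.
have -> : g`_i * h`_j = (g`_i * h`_j + S) - S by rewrite addrK.
exact: rdvdB.
Qed.

Definition primitive_poly f := forall p, prime_elem p -> ~ rdvd p%:P f.

Hypothesis Rfact : factorial_domain R.

Lemma primitive_rdvd_polyC_mul f h a : primitive_poly f -> a != 0 ->
  rdvd f (a%:P * h) -> rdvd f h.
Proof.
move=> fprim a0; move: a a0 h; apply: (factorial_ind Rfact).
  move=> u uU h [q qE]; exists ((u^-1)%:P * q).
  by rewrite -mulrA -qE mulrA -polyCM mulVr // mul1r.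
move=> p a pP IHa h [q qE]; apply: IHa.
have [p0 _ _] := pP; have p0' : p%:P != 0 :> {poly R} by rewrite polyC_eq0.
have [_ _ pPdiv] := prime_elem_polyC pP.
have : rdvd p%:P (q * f) by rewrite -qE polyCM -mulrA; apply: rdvd_mulr (rdvdxx _).
case/pPdiv => [[q' q'E]|/(fprim p pP) //]; exists q'.
by apply: (mulfI p0'); rewrite mulrA -polyCM qE q'E; ring.
Qed.

Lemma polyC_mul_eq_mul f a (D E : {poly R}) : a != 0 -> a%:P * f = D * E ->
  exists D' E', [/\ f = D' * E', size D' = size D & size E' = size E].
Proof.
move=> a0; move: a a0 D E; apply: (factorial_ind Rfact).
  move=> u uU D E fE; exists ((u^-1)%:P * D), E; split=> //.
    by rewrite -mulrA -fE mulrA -polyCM mulVr // mul1r.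
  by rewrite size_Cmul // invr_eq0; apply: contraTneq uU => ->; rewrite unitr0.
move=> p a pP IHa D E fE; have [p0 _ _] := pP.
have p0' : p%:P != 0 :> {poly R} by rewrite polyC_eq0.
have [_ _ pPdiv] := prime_elem_polyC pP.
have : rdvd p%:P (D * E) by rewrite -fE polyCM -mulrA; apply: rdvd_mulr (rdvdxx _).
case/pPdiv => [[D1 DE]|[E1 EE]].
  have [D' [E' [-> sD sE]]] :
      exists D' E', [/\ f = D' * E', size D' = size D1 & size E' = size E].
    by apply: IHa; apply: (mulfI p0'); rewrite mulrA -polyCM fE DE; ring.
  by exists D', E'; rewrite DE sD [_ * p%:P]mulrC size_Cmul.
have [D' [E' [-> sD sE]]] :
    exists D' E', [/\ f = D' * E', size D' = size D & size E' = size E1].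
  by apply: IHa; apply: (mulfI p0'); rewrite mulrA -polyCM fE EE; ring.
by exists D', E'; rewrite EE sE [_ * p%:P]mulrC size_Cmul.
Qed.

Lemma primitive_rdvd_toK f g : primitive_poly f -> toK f %| toK g -> rdvd f g.
Proof.
move=> fprim /dvdpP [Q gE]; have [r [Q' [r0 Q'E]]] := poly_clear_denom Q.
apply: (primitive_rdvd_polyC_mul fprim r0); exists Q'; apply: toK_inj.
by rewrite !toKM toKC Q'E gE mulrA.
Qed.

Lemma indecomposable_toK f : poly_indecomposable f -> poly_indecomposable (toK f).
Proof.
move=> find G H fE; have [rG [D [rG0 DE]]] := poly_clear_denom G.
have [rH [E [rH0 EE]]] := poly_clear_denom H.
have tf0 x : x != 0 -> tf x != 0 by rewrite tofrac_eq0.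
have sD : size D = size G by rewrite -size_toK DE size_Cmul ?tf0.
have sE : size E = size H by rewrite -size_toK EE size_Cmul ?tf0.
have : (rG * rH)%:P * f = D * E.
  by apply: toK_inj; rewrite !toKM toKC DE EE fE tofracM polyCM; ring.
case/(polyC_mul_eq_mul (mulf_neq0 rG0 rH0)) => D' [E' [/find + sD' sE']].
by rewrite -sD -sE -sD' -sE'.
Qed.

Lemma irreducible_toK f : (1 < size f)%N -> poly_indecomposable f ->
  irreducible_poly (toK f).
Proof.
move=> f1 find; split=> [|Q Q1 /dvdpP [e fE]]; first by rewrite size_toK.
have f0 : toK f != 0 by rewrite -size_poly_gt0 size_toK ltnW.
have e0 : e != 0 by apply: contraNneq f0 => e0; rewrite fE e0 mul0r.
have Q0 : Q != 0 by apply: contraNneq f0 => Q0; rewrite fE Q0 mulr0.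
rewrite -dvdp_size_eqp ?fE ?dvdp_mull // size_mul //.
case: (indecomposable_toK find fE) => [e1|]; last first.
  by rewrite leq_eqVlt ltnS leqn0 size_poly_eq0 (negPf Q0) orbF (negPf Q1).
have -> : size e = 1%N by apply/eqP; rewrite eqn_leq e1 size_poly_gt0.
by rewrite add1n.
Qed.

Lemma primitive_indecomposable_prime f : primitive_poly f -> (1 < size f)%N ->
  poly_indecomposable f -> prime_elem f.
Proof.
move=> fprim f1 find; split; first by rewrite -size_poly_gt0 ltnW.
  by rewrite poly_unitE; apply/negP => /andP[/eqP f1']; move: f1; rewrite f1'.
move=> g h [q ghE].
have : toK f %| toK g * toK h by rewrite -toKM ghE toKM dvdp_mull.
by case/(irredp_dvdp_mul (irreducible_toK f1 find))/orP => ?; [left|right];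
  apply: primitive_rdvd_toK.
Qed.

End GaussLemma.

Section FactorialPoly.
Variable R : idomainType.
Hypothesis Rfact : factorial_domain R.

Lemma factorization_polyC (c : R) : c != 0 -> factorization c%:P.
Proof.
move: c; apply: (factorial_ind Rfact) => [u uU|p a pP fa].
  apply: factorization_unit; rewrite poly_unitE size_polyC coefC /= uU andbT.
  by rewrite eqb1; apply: contraTneq uU => ->; rewrite unitr0.
rewrite polyCM; apply: factorizationM fa.
exact/factorization_prime/prime_elem_polyC.
Qed.

(* Either a constant prime divides [f], and dividing it out shortens the
   factorization of the leading coefficient; or [f] splits into two factors of
   smaller size; or [f] is primitive and indecomposable, hence prime. *)
Lemma factorization_poly_step N k (f : {poly R}) :
    (forall g : {poly R}, (size g <= N)%N -> g != 0 -> factorization g) ->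
    (forall k' (g : {poly R}), (k' < k)%N -> (size g <= N.+1)%N -> g != 0 ->
       factorization_len (lead_coef g) k' -> factorization g) ->
  (size f <= N.+1)%N -> f != 0 -> factorization_len (lead_coef f) k ->
  factorization f.
Proof.
move=> IHsize IHlen fN f0 lfk.
have [f1|f1] := leqP (size f) 1.
  rewrite (size1_polyC f1); apply: factorization_polyC.
  by apply: contraNneq f0 => f00; rewrite (size1_polyC f1) f00.
have [[p [pP [f' fE]]]|fprim] := EM (exists p, prime_elem p /\ rdvd p%:P f).
  have f'0 : f' != 0 by apply: contraNneq f0 => f'0; rewrite fE f'0 mul0r.
  have sf' : size f' = size f by rewrite fE mulrC size_Cmul //; case: pP.
  rewrite fE lead_coefM lead_coefC mulrC in lfk.
  have [k' k'k lf'k'] := factorization_len_prime_div pP lfk.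
  rewrite fE; apply: factorizationM; last exact/factorization_prime/prime_elem_polyC.
  by apply: (IHlen k'); rewrite ?sf'.
have [[g [h [fE g1 h1]]]|find] :=
  EM (exists g h, [/\ f = g * h, (1 < size g)%N & (1 < size h)%N]).
  have [g0 h0] : g != 0 /\ h != 0 by rewrite -!size_poly_gt0 (ltnW g1) (ltnW h1).
  have sfE : size f = (size g + size h).-1 by rewrite fE size_mul.
  by rewrite fE; apply: factorizationM; apply: IHsize => //; move: fN; rewrite sfE; lia.
apply/factorization_prime/primitive_indecomposable_prime => //.
  by move=> p pP pf; apply: fprim; exists p.
move=> g h fE; apply: contrapT => /not_orP [g1 h1].
by apply: find; exists g, h; rewrite !ltnNge; split=> //; apply/negP.
Qed.

Theorem factorial_poly : factorial_domain {poly R}.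
Proof.
move=> f f0.
have [k lfk] : factorization (lead_coef f) by apply: Rfact; rewrite lead_coef_eq0.
move: {2}(size f) (leqnn (size f)) => N fN.
elim: N f f0 k lfk fN => [|N IHN] f f0 k lfk fN.
  by move: f0; rewrite -size_poly_gt0 leqNgt ltnS fN.
elim/ltn_ind: k f f0 lfk fN => k IHk f f0 lfk fN.
apply: factorization_poly_step fN f0 lfk.
  move=> g gN g0.
  have [k' lgk'] : factorization (lead_coef g) by apply: Rfact; rewrite lead_coef_eq0.
  exact: IHN lgk' gN.
by move=> k' g k'k gN g0 lgk'; apply: IHk k'k g g0 lgk' gN.
Qed.

End FactorialPoly.

Lemma factorial_domain_bij (A B : idomainType) (phi : {rmorphism A -> B}) :
  bijective phi -> factorial_domain B -> factorial_domain A.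
Proof.
case=> psi phiK psiK Bfact a a0.
have psiM x y : psi (x * y) = psi x * psi y.
  by apply: (can_inj phiK); rewrite rmorphM /= !psiK.
have psi_unit u : u \is a GRing.unit -> psi u \is a GRing.unit.
  move=> uU; apply/unitrPr; exists (psi u^-1).
  by rewrite -psiM mulrV // -(rmorph1 phi) phiK.
have psi_prime p : prime_elem p -> prime_elem (psi p).
  move=> [p0 pNU pdiv]; split.
  - by apply: contraNneq p0 => ps0; rewrite -[p]psiK ps0 rmorph0.
  - by apply: contra pNU => /(rmorph_unit phi); rewrite psiK.
  move=> x y [z xyE].
  have : rdvd p (phi x * phi y) by exists (phi z); rewrite -rmorphM xyE rmorphM psiK.
  by case/pdiv => -[w wE]; [left|right]; exists (psi w); rewrite -psiM -wE phiK.
have phia0 : phi a != 0.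
  by apply: contraNneq a0 => pa0; rewrite -[a]phiK pa0 -(rmorph0 phi) phiK.
rewrite -[a]phiK; move: (phi a) phia0; apply: (factorial_ind Bfact) => [u uU|p b pP fb].
  exact/factorization_unit/psi_unit.
by rewrite psiM; apply: factorizationM fb; apply/factorization_prime/psi_prime.
Qed.

Section MpolyUnivariate.
Variables (R : idomainType) (n : nat).
Local Notation widen := (widen_ord (leqnSn n)).

Definition mnm_restr (m : 'X_{1..n.+1}) : 'X_{1..n} := [multinom m (widen i) | i < n].

Lemma mnm_restr_inj (m1 m2 : 'X_{1..n.+1}) :
  mnm_restr m1 = mnm_restr m2 -> m1 ord_max = m2 ord_max -> m1 = m2.
Proof.
move=> /mnmP m12 m12max; apply/mnmP => i.
have [ilt|ige] := ltnP i n.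
  have -> : i = widen (Ordinal ilt) by apply: val_inj.
  by move: (m12 (Ordinal ilt)); rewrite !mnmE.
have -> : i = ord_max by apply: val_inj => /=; apply/eqP; rewrite eqn_leq ige -ltnS ltn_ord.
exact: m12max.
Qed.

Lemma muni_coef (p : {mpoly R[n.+1]}) (m : 'X_{1..n.+1}) :
  ((muni p)`_(m ord_max))@_(mnm_restr m) = p@_m.
Proof.
rewrite muniE coef_sum raddf_sum /=.
under eq_bigr => m' _ do
  rewrite coefZ coefXn mulr_natr mcoeffMn mcoeffZ mcoeffX -/(mnm_restr m').
have [mp|mNp] := boolP (m \in msupp p).
  rewrite (bigD1_seq m) ?msupp_uniq //= !eqxx /= mulr1 mulr1n big1_seq ?addr0 //.
  move=> m' /andP[m'm _]; case: eqP => e1; case: eqP => e2 //=; rewrite ?mulr0n ?mulr0 //.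
  by case/eqP: m'm; apply: mnm_restr_inj.
rewrite big1_seq; first by apply/esym/eqP; move: mNp; rewrite mcoeff_msupp negbK.
move=> m' /andP[_ m'p]; case: eqP => e1; case: eqP => e2 //=; rewrite ?mulr0n ?mulr0 //.
by move: m'p mNp; rewrite (mnm_restr_inj e1 (esym e2)) => ->.
Qed.

Lemma muni_inj : injective (@muni n R).
Proof. by move=> p q pq; apply/mpolyP => m; rewrite -!muni_coef pq. Qed.

Lemma muni_mwiden (c : {mpoly R[n]}) : muni (mwiden c) = c%:P.
Proof.
rewrite [in LHS](mpolyE c) (big_morph _ (@mwidenD _ _) (@mwiden0 _ _)).
rewrite (big_morph _ (@muniD _ _) (@muni0 _ _)) [in RHS](mpolyE c) rmorph_sum.
apply: eq_bigr => m _; rewrite mwidenZ mwidenX muniZ muniE msuppX big_seq1.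
rewrite mcoeffX eqxx scale1r mnmwiden_ordmax expr0 alg_polyC.
rewrite (_ : [multinom _ | i < n] = m); last first.
  by apply/mnmP => i; rewrite mnmE mnmwiden_widen.
by rewrite -mul_mpolyC -mul_polyC -polyCM mul_mpolyC.
Qed.

Lemma muni_Xmax : muni ('X_ord_max : {mpoly R[n.+1]}) = 'X.
Proof.
rewrite muniE msuppX big_seq1 mcoeffX eqxx scale1r mnm1E eqxx expr1.
rewrite (_ : [multinom _ | i < n] = 0%MM) ?mpolyX0 ?scale1r //.
apply/mnmP => i; rewrite mnmE mnm1E mnm0E.
by case: eqP => // /(congr1 val) /= iE; move: (ltn_ord i); rewrite -iE ltnn.
Qed.

Lemma muni_surj (P : {poly {mpoly R[n]}}) : exists p, muni p = P.
Proof.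
elim/poly_ind: P => [|P c [p <-]]; first by exists 0; rewrite raddf0.
by exists (p * 'X_ord_max + mwiden c); rewrite muniD muniM muni_Xmax muni_mwiden.
Qed.

End MpolyUnivariate.

Theorem factorial_mpoly (k : fieldType) (n : nat) : factorial_domain {mpoly k[n]}.
Proof.
elim: n => [|n IHn].
  move=> p p0; have pE : p = (p@_0%MM)%:MP.
    apply/mpolyP => m; rewrite mcoeffC (_ : m = 0%MM) ?eqxx ?mulr1 //.
    by apply/mnmP => -[].
  have c0 : p@_0%MM != 0 by apply: contraNneq p0 => c0; rewrite pE c0.
  apply: factorization_unit; rewrite pE; apply/unitrPr; exists (p@_0%MM)^-1%:MP.
  by rewrite -mpolyCM mulfV.
have [psi psiK] := choice (@muni_surj k n).
apply: (@factorial_domain_bij _ _ (@muni n k)) (factorial_poly IHn).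
by exists psi => // p; apply: muni_inj; rewrite psiK.
Qed.

(** * Column matroids and minors *)

Lemma sorted_enum_ord_set c (S : {set 'I_c}) :
  sorted (fun x y : 'I_c => (x < y)%N) (enum S).
Proof.
have : sorted (fun x y : 'I_c => (x < y)%N) (enum 'I_c).
  by have := iota_ltn_sorted 0 c; rewrite -val_enum_ord sorted_map.
by rewrite enumT /enum_mem; apply: sorted_filter => x y z; apply: ltn_trans.
Qed.

Lemma enum_val_ltn c (S : {set 'I_c}) (i j : 'I_#|S|) :
  (i < j)%N -> (enum_val i < enum_val j)%N.
Proof.
move=> ij; have x0 : 'I_c := enum_val i.
rewrite !(enum_val_nth x0).
by apply: (sorted_ltn_nth (fun x y z => @ltn_trans _ _ _) x0 (sorted_enum_ord_set S));
  rewrite // inE -cardE ltn_ord.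
Qed.

Lemma increasing_enum_val c (S : {set 'I_c}) (r : nat) (h : 'I_r -> 'I_#|S|) :
  (forall i j : 'I_r, (i < j)%N -> (h i < h j)%N) ->
  increasing [ffun i => enum_val (h i)].
Proof.
move=> hmono; apply/forallP => i; apply/forallP => j; apply/implyP => ij.
by rewrite !ffunE; apply/enum_val_ltn/hmono.
Qed.

Section ColumnMatroid.
Variables (F : fieldType) (m c : nat) (A : 'M[F]_(m, c)).
Implicit Types S T : {set 'I_c}.

(* Columns are handled as rows of the transpose, since mxalgebra works with
   row spaces. *)
Local Notation cols S := (colsubset A S)^T.

Lemma row_cols S i : row i (cols S) = row (enum_val i) A^T.
Proof. by apply/rowP => j; rewrite !mxE. Qed.

Lemma row_sub_cols S j : j \in S -> (row j A^T <= cols S)%MS.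
Proof.
by move=> jS; apply: (eq_row_sub (enum_rank_in jS j)); rewrite row_cols enum_rankK_in.
Qed.

Lemma cols_sub S T : S \subset T -> (cols S <= cols T)%MS.
Proof.
move=> ST; apply/row_subP => i; rewrite row_cols.
by apply/row_sub_cols/(subsetP ST)/enum_valP.
Qed.

Lemma rank_colsubsetS S T : S \subset T ->
  (\rank (colsubset A S) <= \rank (colsubset A T))%N.
Proof.
move=> ST; rewrite -[\rank (colsubset A S)]mxrank_tr -[\rank (colsubset A T)]mxrank_tr.
exact/mxrankS/cols_sub.
Qed.

Lemma rank_colsubsetT : \rank (colsubset A setT) = \rank A.
Proof.
rewrite -mxrank_tr -[\rank A]mxrank_tr; apply/eqP; rewrite eqn_leq !mxrankS //.
  by apply/row_subP => j; apply/row_sub_cols/in_setT.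
by apply/row_subP => i; rewrite row_cols row_sub.
Qed.

Lemma rank_colsubset_setD S T : S \subset T ->
  (\rank (colsubset A T) <= \rank (colsubset A S) + #|T :\: S|)%N.
Proof.
move=> ST; rewrite -[\rank (colsubset A T)]mxrank_tr -[\rank (colsubset A S)]mxrank_tr.
have TSD : (cols T <= cols S + cols (T :\: S))%MS.
  apply/row_subP => i; rewrite row_cols.
  have [jS|jNS] := boolP (enum_val i \in S).
    exact/(submx_trans (row_sub_cols jS))/addsmxSl.
  apply/(submx_trans _ (addsmxSr _ _))/row_sub_cols.
  by rewrite inE jNS enum_valP.
apply: leq_trans (mxrankS TSD) _; apply: leq_trans (mxrank_adds_leqif _ _).1 _.
by rewrite leq_add2l rank_leq_row.
Qed.

Lemma col_indep_sub S T : S \subset T -> col_indep A T -> col_indep A S.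
Proof.
move=> ST rT; apply/eqP; rewrite eqn_leq rank_leq_col /=.
have := rank_colsubset_setD ST; rewrite rT cardsD (setIidPr ST).
move=> le_TS; rewrite -(leq_add2r (#|T| - #|S|)) subnKC //.
exact: subset_leq_card.
Qed.

Lemma rank_colsubset_maximal S T : T \subset S -> col_indep A T ->
  (forall j, j \in S -> j \notin T -> ~ col_indep A (j |: T)) ->
  \rank (colsubset A S) = #|T|.
Proof.
move=> TS rT Tmax; apply/eqP; rewrite eqn_leq -{2}rT rank_colsubsetS // andbT.
suff ST : (cols S <= cols T)%MS.
  by rewrite -[\rank _]mxrank_tr (leq_trans (mxrankS ST)) // mxrank_tr rT.
apply/row_subP => i; rewrite row_cols; set j := enum_val i.
have [jT|jNT] := boolP (j \in T); first exact: row_sub_cols.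
have TjT : T \subset j |: T by apply: subsetUr.
have rjT : (\rank (colsubset A (j |: T)) <= #|T|)%N.
  have jTind : \rank (colsubset A (j |: T)) != #|j |: T|.
    by apply/eqP; apply: Tmax (enum_valP i) jNT.
  move: (rank_leq_col (colsubset A (j |: T))) jTind.
  set z := \rank _; rewrite cardsU1 jNT add1n.
  by rewrite leq_eqVlt ltnS => /orP[->|].
have : (cols (j |: T) <= cols T)%MS.
  case: (mxrank_leqif_sup (cols_sub TjT)) => _ <-.
  by rewrite eqn_leq mxrankS ?cols_sub //= !mxrank_tr rT.
by apply: submx_trans; apply/row_sub_cols/setU11.
Qed.

Lemma col_indep_exists S k : (k <= \rank (colsubset A S))%N ->
  exists T, [/\ T \subset S, col_indep A T & #|T| = k].
Proof.
move=> kS; pose Pr T := [&& T \subset S, \rank (colsubset A T) == #|T| & (#|T| <= k)%N].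
have Pr0 : Pr set0.
  rewrite /Pr sub0set /=; move: (rank_leq_col (colsubset A set0)).
  by set z := \rank _; rewrite cards0 leqn0 => /eqP ->.
have [T /and3P [TS /eqP rT Tk] Tmax] := arg_maxnP (fun T => #|T|) Pr0.
exists T; split=> //; apply/eqP; rewrite eqn_leq Tk /=; apply: contraTT kS.
rewrite -!ltnNge => Tltk; rewrite (rank_colsubset_maximal TS rT) //.
move=> j jS jNT /eqP rjT; have := Tmax (j |: T).
rewrite /Pr subUset sub1set jS TS rjT cardsU1 jNT add1n Tltk => /(_ isT).
by rewrite /= ltnn.
Qed.

Lemma minor_neq0_rank r (f : {ffun 'I_r -> 'I_m}) (g : {ffun 'I_r -> 'I_c}) :
  minor A f g != 0 -> (r <= \rank A)%N.
Proof.
move=> fg0; have -> : r = \rank (mxsub f g A).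
  by apply/esym/mxrank_unit; rewrite unitmxE unitfE.
rewrite mxsubrc rowsubE; apply: leq_trans (mxrankM_maxr _ _) _.
rewrite -mxrank_tr (_ : (colsub g A)^T = rowsub g A^T); last first.
  by apply/matrixP => i j; rewrite !mxE.
by rewrite rowsubE -(mxrank_tr A); apply: mxrankM_maxr.
Qed.

End ColumnMatroid.

(* Pick [r] independent columns, then [r] independent rows among them. *)
Lemma rank_exists_minor (F : fieldType) m c (A : 'M[F]_(m, c)) r :
  (r <= \rank A)%N -> exists (f : {ffun 'I_r -> 'I_m}) (g : {ffun 'I_r -> 'I_c}),
    [/\ increasing f, increasing g & minor A f g != 0].
Proof.
rewrite -rank_colsubsetT => /col_indep_exists [T [_ rT <-{r}]].
pose B := (colsubset A T)^T.
have [Rw [_ rRw RwT]] :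
    exists Rw : {set 'I_m}, [/\ Rw \subset setT, col_indep B Rw & #|Rw| = #|T|].
  by apply: col_indep_exists; rewrite rank_colsubsetT mxrank_tr rT.
exists [ffun i => enum_val (cast_ord (esym RwT) i)], [ffun j => enum_val j].
split; try exact: increasing_enum_val.
rewrite /minor -unitfE -unitmxE -row_free_unit /row_free; apply/eqP.
have -> : \matrix_(i, j) A ([ffun i => enum_val (cast_ord (esym RwT) i)] i)
                            ([ffun j => enum_val j] j) =
          rowsub (cast_ord (esym RwT)) (colsubset B Rw)^T.
  by apply/matrixP => i j; rewrite !mxE !ffunE.
by rewrite rowsub_cast (eqmx_cast _ _) mxrank_tr rRw.
Qed.

Section Specializations.
Variables (k : fieldType) (n : nat) (P : prime_idealr {mpoly k[n]}).
Implicit Types (r c s : nat).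
Local Open Scope quotient_scope.

Lemma toFrac_eq0 (g : {mpoly k[n]}) : (toFrac P g == 0) = (g \in P).
Proof.
rewrite /toFrac tofrac_eq0 -(rmorph0 (\pi_(Defs.quotP P))).
by rewrite -Quotient.idealrBE subr0.
Qed.

Lemma minor_frac_mx r c s (A : 'M[{mpoly k[n]}]_(c, s)) f g :
  minor (frac_mx P A) f g = toFrac P (@minor _ _ _ r A f g).
Proof.
by rewrite /minor /toFrac -!det_map_mx; congr (\det _); apply/matrixP => i j; rewrite !mxE.
Qed.

Lemma minor_eval_mx r c s (A : 'M[{mpoly k[n]}]_(c, s)) (p : 'I_n -> k) f g :
  minor (eval_mx A p) f g = (@minor _ _ _ r A f g).@[p].
Proof.
by rewrite /minor -det_map_mx; congr (\det _); apply/matrixP => i j; rewrite !mxE.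
Qed.

Lemma colsubset_eval_mx c (A : 'M[{mpoly k[n]}]_(c, n)) (p : 'I_n -> k) S :
  colsubset (eval_mx A p) S = eval_mx (colsubset A S) p.
Proof. by apply/matrixP => i j; rewrite !mxE. Qed.

Lemma colsubset_frac_mx c (A : 'M[{mpoly k[n]}]_(c, n)) S :
  colsubset (frac_mx P A) S = frac_mx P (colsubset A S).
Proof. by apply/matrixP => i j; rewrite !mxE. Qed.

End Specializations.

Section MinorIdeal.
Variables (R : comNzRingType) (c s r : nat) (A : 'M[R]_(c, s)).

Lemma minor_idealMl g h : minor_ideal r A g -> minor_ideal r A (h * g).
Proof.
move=> [coef ->]; exists (fun f g => h * coef f g).
rewrite mulr_sumr; apply: eq_bigr => f _; rewrite mulr_sumr; apply: eq_bigr => g' _.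
by rewrite mulrA.
Qed.

Lemma minor_ideal_minor (f : {ffun 'I_r -> 'I_c}) (g : {ffun 'I_r -> 'I_s}) :
  increasing f -> increasing g -> minor_ideal r A (minor A f g).
Proof.
move=> fi gi; exists (fun f' g' => ((f' == f) && (g' == g))%:R).
rewrite (bigD1 f) //= (bigD1 g) //= !eqxx mul1r big1 ?addr0; last first.
  by move=> g' /andP[_ /negPf->]; rewrite mul0r.
rewrite big1 ?addr0 // => f' /andP[_ /negPf->].
by rewrite big1 // => g' _; rewrite mul0r.
Qed.

Lemma minor_ideal_ind (Q : R -> Prop) g :
    Q 0 -> (forall x y, Q x -> Q y -> Q (x + y)) -> (forall x y, Q y -> Q (x * y)) ->
    (forall (f : {ffun 'I_r -> 'I_c}) (g : {ffun 'I_r -> 'I_s}),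
       increasing f -> increasing g -> Q (minor A f g)) ->
  minor_ideal r A g -> Q g.
Proof.
move=> Q0 QD QM Qminor [coef ->].
by apply: big_ind => // f fi; apply: big_ind => // g' gi; apply/QM/Qminor.
Qed.

End MinorIdeal.

Lemma prod_nonvanishing (R : comNzRingType) (K : idomainType)
    (phi : {rmorphism R -> K}) (T : finType) (Q : T -> Prop) (I : T -> R -> Prop) :
    (forall t, Q t -> forall g h, I t g -> I t (h * g)) ->
    (forall t, Q t -> exists2 g, I t g & phi g != 0) ->
  exists2 G, (forall t, Q t -> I t G) & phi G != 0.
Proof.
move=> IM Inz.
have /choice [h hP] : forall t, exists g, (Q t -> I t g) /\ phi g != 0.
  move=> t; have [/Inz [g Ig g0]|NQt] := EM (Q t); first by exists g.
  by exists 1; rewrite rmorph1 oner_neq0.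
exists (\prod_t h t); last by rewrite rmorph_prod; apply/prodf_neq0 => t _; case: (hP t).
move=> t Qt; rewrite (bigD1 t) //= mulrC; apply: IM => //.
by case: (hP t) => /(_ Qt).
Qed.

(** * The non-matroidal locus *)

Section EvalMinors.
Variables (k : fieldType) (n c s r : nat) (A : 'M[{mpoly k[n]}]_(c, s)) (p : 'I_n -> k).

Lemma minor_ideal_eval_nonvanishing : (r <= \rank (eval_mx A p))%N ->
  exists2 g, minor_ideal r A g & g.@[p] != 0.
Proof.
case/rank_exists_minor => f [g [fi gi]]; rewrite minor_eval_mx => fg0.
by exists (minor A f g); first exact: minor_ideal_minor.
Qed.

Lemma minor_ideal_eval_vanish g : (\rank (eval_mx A p) < r)%N ->
  minor_ideal r A g -> g.@[p] = 0.
Proof.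
move=> rk; apply: (minor_ideal_ind (Q := fun x => x.@[p] = 0)).
- exact: rmorph0.
- by move=> x y x0 y0; rewrite rmorphD /= x0 y0 addr0.
- by move=> x y y0; rewrite rmorphM /= y0 mulr0.
move=> f h _ _; apply/eqP; apply: contraTT rk => fh0.
by rewrite -leqNgt (minor_neq0_rank (f := f) (g := h)) // minor_eval_mx.
Qed.

End EvalMinors.

Section NonMatroidalLocus.
Variables (k : fieldType) (n m d : nat) (M : 'M[{mpoly k[n]}]_(m, n))
  (P : prime_idealr {mpoly k[n]}) (indep : {set 'I_n} -> Prop).
Hypothesis basis_card_d : exists B, is_basis indep B /\ #|B| = d.
Hypothesis M_rep : represents (frac_mx P M) (dual_indep indep).

Local Notation MK := (frac_mx P M).
Local Notation Ind := (dual_indep indep).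
Local Notation isB := (is_basis indep).
Local Notation VP := (vanishes (fun g => g \in P)).
Local Notation Imin S := (minor_ideal (n - d) (colsubset M S)).
Implicit Types (S T B : {set 'I_n}) (p : 'I_n -> k).

Lemma dual_indep_setC B : isB B -> Ind (~: B).
Proof. by move=> Bb; exists B. Qed.

Lemma dual_indep_setC_max B j : isB B -> j \notin ~: B -> ~ Ind (j |: ~: B).
Proof.
rewrite inE negbK => -[Bind _] jB [B' [[_ B'max] jBB']].
apply: (B'max B) Bind; apply: sub_proper_trans (properD1 jB).
by rewrite -setCS setCD setUC.
Qed.

Lemma rank_frac_mx B : isB B -> \rank MK = #|~: B|.
Proof.
move=> Bb; rewrite -rank_colsubsetT; apply: rank_colsubset_maximal.
- exact: subsetT.
- exact/M_rep/dual_indep_setC.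
- by move=> j _ jNB /M_rep; apply: dual_indep_setC_max.
Qed.

Lemma card_basis B : isB B -> #|B| = d.
Proof.
move=> Bb; have [B0 [B0b <-]] := basis_card_d.
by rewrite (cardsCs B) (cardsCs B0) -(rank_frac_mx Bb) -(rank_frac_mx B0b).
Qed.

Lemma card_setC_basis B : isB B -> #|~: B| = (n - d)%N.
Proof. by move=> Bb; rewrite cardsCs setCK card_ord card_basis. Qed.

Lemma eval_col_indep p S : VP p -> col_indep (eval_mx M p) S -> Ind S.
Proof.
move=> pV rS; apply/M_rep.
have : (#|S| <= \rank (colsubset (eval_mx M p) S))%N by rewrite rS.
case/rank_exists_minor => f [g [_ _]]; rewrite colsubset_eval_mx minor_eval_mx => fg0.
apply/eqP; rewrite eqn_leq rank_leq_col (minor_neq0_rank (f := f) (g := g)) //.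
by rewrite colsubset_frac_mx minor_frac_mx toFrac_eq0; apply: contra fg0 => /pV ->.
Qed.

Lemma represents_eval p : VP p ->
  represents (eval_mx M p) Ind <-> forall B, isB B -> col_indep (eval_mx M p) (~: B).
Proof.
move=> pV; split=> [rep B Bb|rep S]; first exact/rep/dual_indep_setC.
split; first exact: eval_col_indep.
by case=> B [Bb SB]; apply: col_indep_sub SB (rep B Bb).
Qed.

Lemma col_indep_setC_rank p B : isB B ->
  col_indep (eval_mx M p) (~: B) <->
  (n - d <= \rank (colsubset (eval_mx M p) (~: B)))%N.
Proof.
move=> Bb; rewrite /col_indep -(card_setC_basis Bb).
split=> [->//|rk]; apply/eqP; rewrite eqn_leq rk andbT.
exact: rank_leq_col.
Qed.

Definition nonzero_mod_P S := ~ (forall h, Imin S h -> h \in P).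

Lemma nonzero_mod_PP S : nonzero_mod_P S <->
  exists (f : {ffun 'I_(n - d) -> 'I_m}) (g : {ffun 'I_(n - d) -> 'I_#|S|}),
    [/\ increasing f, increasing g & minor (colsubset M S) f g \notin P].
Proof.
split=> [SP|[f [g [fi gi fgP]]] SP]; last first.
  by apply: (negP fgP); apply: SP; apply: minor_ideal_minor.
apply: contrapT => noMinor; apply: SP => h.
apply: (minor_ideal_ind (Q := fun x => x \in P)).
- exact: rpred0.
- by move=> x y; apply: rpredD.
- by move=> x y; apply: idealMr.
move=> f g fi gi; apply: contrapT => /negP fgP.
by apply: noMinor; exists f, g.
Qed.

Lemma nonzero_mod_P_setC B : isB B -> nonzero_mod_P (~: B).
Proof.
move=> Bb; apply/nonzero_mod_PP.
have : (n - d <= \rank (colsubset MK (~: B)))%N.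
  by rewrite -(card_setC_basis Bb); have /M_rep -> := dual_indep_setC Bb.
case/rank_exists_minor => f [g [fi gi]]; rewrite colsubset_frac_mx minor_frac_mx.
by rewrite toFrac_eq0 => fgP; exists f, g.
Qed.

Definition basis_minor_ideal g := forall B, isB B -> Imin (~: B) g.
Definition nonzero_minor_ideal g := forall S, nonzero_mod_P S -> Imin S g.

Lemma nonmatroidal_basis p : VP p -> ~ represents (eval_mx M p) Ind ->
  exists2 B, isB B & (\rank (colsubset (eval_mx M p) (~: B)) < n - d)%N.
Proof.
move=> pV /(contra_not (proj2 (represents_eval pV))) /existsNP [B].
move/not_implyP => [Bb NBi]; exists B => //; rewrite ltnNge; apply/negP => rk.
exact/NBi/(col_indep_setC_rank _ Bb).
Qed.

Theorem nonmatroidal_locus_basis p :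
  (VP p /\ ~ represents (eval_mx M p) Ind) <-> (VP p /\ vanishes basis_minor_ideal p).
Proof.
split=> -[pV NMp]; split=> //.
  move=> g gI; have [B Bb rk] := nonmatroidal_basis pV NMp.
  by apply: minor_ideal_eval_vanish (gI B Bb); rewrite -colsubset_eval_mx.
move=> rep; have [G GI] : exists2 G, basis_minor_ideal G & G.@[p] != 0.
  apply: (prod_nonvanishing (phi := meval p) (Q := isB) (I := fun B => Imin (~: B))).
    by move=> B _ g h; apply: minor_idealMl.
  move=> B Bb; apply: minor_ideal_eval_nonvanishing.
  rewrite -colsubset_eval_mx -col_indep_setC_rank //.
  exact: (proj1 (represents_eval pV) rep).
by rewrite (NMp _ GI) eqxx.
Qed.

Theorem nonmatroidal_locus_nonzero p :
  (VP p /\ ~ represents (eval_mx M p) Ind) <-> (VP p /\ vanishes nonzero_minor_ideal p).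
Proof.
split=> -[pV NMp]; split=> //.
  move=> g gI; have [B Bb rk] := nonmatroidal_basis pV NMp.
  apply: minor_ideal_eval_vanish (gI _ (nonzero_mod_P_setC Bb)).
  by rewrite -colsubset_eval_mx.
move=> rep; have [G GI] : exists2 G, nonzero_minor_ideal G & G.@[p] != 0.
  apply: (prod_nonvanishing (phi := meval p) (Q := nonzero_mod_P) (I := fun S => Imin S)).
    by move=> S _ g h; apply: minor_idealMl.
  move=> S /nonzero_mod_PP [f [g [_ _ fgP]]]; apply: minor_ideal_eval_nonvanishing.
  have : minor (colsubset MK S) f g != 0.
    by rewrite colsubset_frac_mx minor_frac_mx toFrac_eq0.
  case/minor_neq0_rank/col_indep_exists => T [TS /M_rep /rep TP <-].
  by rewrite -colsubset_eval_mx -TP rank_colsubsetS.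
by rewrite (NMp _ GI) eqxx.
Qed.

End NonMatroidalLocus.

(** * Maximal minors *)

Section IncreasingMaps.
Variables (r c : nat) (f : {ffun 'I_r -> 'I_c}).
Hypothesis f_incr : increasing f.

Lemma increasing_mono (i j : 'I_r) : (i < j)%N -> (f i < f j)%N.
Proof. exact: implyP (forallP (forallP f_incr i) j). Qed.

Lemma increasing_inj : injective f.
Proof.
move=> i j fij; apply: val_inj; case: (ltngtP i j) => // ij;
  by have := increasing_mono ij; rewrite fij ltnn.
Qed.

Definition image_set : {set 'I_c} := [set f i | i in 'I_r].

Lemma card_image_set : #|image_set| = r.
Proof. by rewrite card_imset ?card_ord //; apply: increasing_inj. Qed.

Lemma enum_image_set : enum image_set = map f (enum 'I_r).
Proof.
apply: (@irr_sorted_eq _ (fun x y : 'I_c => (x < y)%N)).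
- by move=> x y z; apply: ltn_trans.
- by move=> x; rewrite ltnn.
- exact: sorted_enum_ord_set.
- rewrite sorted_map; have := sorted_enum_ord_set [set: 'I_r].
  have -> : enum [set: 'I_r] = enum 'I_r by apply: eq_enum => x; rewrite inE.
  by apply: sub_sorted => x y; apply: increasing_mono.
move=> x; rewrite mem_enum; apply/imsetP/mapP => -[i _ ->]; exists i => //.
by rewrite mem_enum.
Qed.

Lemma enum_val_image_set (j : 'I_#|image_set|) :
  enum_val j = f (cast_ord card_image_set j).
Proof.
rewrite (enum_val_nth (enum_val j)) enum_image_set.
have jr : (j < size (enum 'I_r))%N by rewrite size_enum_ord -card_image_set.
rewrite (nth_map (cast_ord card_image_set j)) //; congr (f _); apply: val_inj => /=.
by rewrite nth_enum_ord // -card_image_set.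
Qed.

End IncreasingMaps.

Lemma increasing_ord_id r (f : {ffun 'I_r -> 'I_r}) (i : 'I_r) :
  increasing f -> f i = i.
Proof.
move=> f_incr; have fT : image_set f = setT.
  by apply/eqP; rewrite eqEcard subsetT cardsT card_ord (card_image_set f_incr) leqnn.
have := enum_image_set f_incr; rewrite fT.
have -> : enum [set: 'I_r] = enum 'I_r by apply: eq_enum => x; rewrite inE.
move=> /(congr1 (nth i ^~ i)); rewrite nth_ord_enum (nth_map i) ?nth_ord_enum //.
by rewrite size_enum_ord.
Qed.

Section MaximalMinors.
Variables (k : fieldType) (n d : nat) (M : 'M[{mpoly k[n]}]_(n - d, n))
  (P : prime_idealr {mpoly k[n]}) (indep : {set 'I_n} -> Prop).
Local Notation r := (n - d)%N.
Local Notation Imin S := (minor_ideal r (colsubset M S)).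
Implicit Types (S : {set 'I_n}) (c : {ffun 'I_r -> 'I_n}) (g : {mpoly k[n]}).

Lemma minor_colsubset_maxminor S (f : {ffun 'I_r -> 'I_r}) (h : {ffun 'I_r -> 'I_#|S|}) :
  increasing f -> increasing h ->
  increasing [ffun j => enum_val (h j)] /\
  minor (colsubset M S) f h = maxminor M [ffun j => enum_val (h j)].
Proof.
move=> f_incr h_incr; split; first exact/increasing_enum_val/increasing_mono.
rewrite /minor /maxminor; congr (\det _); apply/matrixP => i j.
by rewrite !mxE ffunE increasing_ord_id.
Qed.

Lemma minor_colsubset_image c (f : {ffun 'I_r -> 'I_r}) (h : {ffun 'I_r -> 'I_#|image_set c|}) :
  increasing c -> increasing f -> increasing h ->
  minor (colsubset M (image_set c)) f h = maxminor M c.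
Proof.
move=> c_incr f_incr h_incr; have [_ ->] := minor_colsubset_maxminor f_incr h_incr.
congr (maxminor _ _); apply/ffunP => j; rewrite ffunE enum_val_image_set.
pose h' := [ffun i => cast_ord (card_image_set c_incr) (h i)].
have h'_incr : increasing h'.
  by apply/forallP => i; apply/forallP => i'; apply/implyP; rewrite !ffunE; apply: increasing_mono.
by congr (c _); have := increasing_ord_id j h'_incr; rewrite ffunE.
Qed.

Lemma minor_image_set c : increasing c ->
  exists (f : {ffun 'I_r -> 'I_r}) (h : {ffun 'I_r -> 'I_#|image_set c|}),
    [/\ increasing f, increasing h & minor (colsubset M (image_set c)) f h = maxminor M c].
Proof.
move=> c_incr; pose f : {ffun 'I_r -> 'I_r} := [ffun i => i].
pose h : {ffun 'I_r -> 'I_#|image_set c|} := [ffun i => cast_ord (esym (card_image_set c_incr)) i].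
have f_incr : increasing f by apply/forallP => i; apply/forallP => j; rewrite !ffunE implybb.
have h_incr : increasing h by apply/forallP => i; apply/forallP => j; rewrite !ffunE implybb.
by exists f, h; split; rewrite ?minor_colsubset_image.
Qed.

Lemma rdvd_minor_ideal_image c g : increasing c ->
  Imin (image_set c) g -> rdvd (maxminor M c) g.
Proof.
move=> c_incr [coef ->]; exists (\sum_(f | increasing f) \sum_(h | increasing h) coef f h).
rewrite mulr_suml; apply: eq_bigr => f f_incr; rewrite mulr_suml.
by apply: eq_bigr => h h_incr; rewrite minor_colsubset_image.
Qed.

Definition maxminor_dvd g :=
  forall c, increasing c -> maxminor M c \notin P -> rdvd (maxminor M c) g.

Lemma maxminor_lcm_exists :
  exists h, maxminor_dvd h /\ forall q, maxminor_dvd q -> rdvd h q.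
Proof.
pose L := [seq maxminor M c | c <- enum {ffun 'I_r -> 'I_n}
             & increasing c && (maxminor M c \notin P)].
have [h [hL hmin]] : exists h, is_lcm_seq L h.
  apply: lcm_seq_exists; first exact: factorial_mpoly.
  move=> a /mapP [c].
  rewrite mem_filter => /andP [/andP [_ cP] _] ->.
  by apply: contraNneq cP => ->; apply: rpred0.
exists h; split=> [c c_incr cP|q qdvd].
  by apply: hL; apply/mapP; exists c; rewrite // mem_filter c_incr cP mem_enum.
apply: hmin => a /mapP [c]; rewrite mem_filter => /andP [/andP [c_incr cP] _] ->.
exact: qdvd.
Qed.

Lemma rdvd_maxminor_lcm h : maxminor_dvd h ->
  (forall q, maxminor_dvd q -> rdvd h q) -> forall g, rdvd h g <-> maxminor_dvd g.
Proof.
move=> hdvd hmin g; split=> [hg c c_incr cP|]; last exact: hmin.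
exact: rdvd_trans (hdvd c c_incr cP) hg.
Qed.

Lemma nonzero_minor_idealE g : nonzero_minor_ideal d M P g <-> maxminor_dvd g.
Proof.
split=> [gI c c_incr cP|gdvd S /nonzero_mod_PP [f [h [f_incr h_incr]]]].
  have [f [h [f_incr h_incr fhE]]] := minor_image_set c_incr.
  apply: (rdvd_minor_ideal_image c_incr); apply: gI; apply/nonzero_mod_PP.
  by exists f, h; rewrite fhE.
have [c_incr fhE] := minor_colsubset_maxminor f_incr h_incr.
rewrite fhE => /(gdvd _ c_incr) [q ->]; rewrite -fhE.
exact/minor_idealMl/minor_ideal_minor.
Qed.

Hypothesis basis_card_d : exists B, is_basis indep B /\ #|B| = d.
Hypothesis M_rep : represents (frac_mx P M) (dual_indep indep).

Lemma basis_minor_idealE g : basis_minor_ideal d M indep g <-> maxminor_dvd g.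
Proof.
split=> [gI c c_incr cP|gdvd B Bb]; last first.
  apply: (proj2 (nonzero_minor_idealE g) gdvd).
  exact: nonzero_mod_P_setC basis_card_d M_rep _ Bb.
have cK : col_indep (frac_mx P M) (image_set c).
  have [f [h [_ _ fhE]]] := minor_image_set c_incr.
  have fh0 : minor (colsubset (frac_mx P M) (image_set c)) f h != 0.
    by rewrite colsubset_frac_mx minor_frac_mx toFrac_eq0 fhE.
  apply/eqP; rewrite eqn_leq rank_leq_col /=.
  by apply: leq_trans (minor_neq0_rank fh0); rewrite card_image_set.
have [B [Bb cB]] := proj1 (M_rep _) cK.
have cBE : image_set c = ~: B.
  apply/eqP; rewrite eqEcard cB /= (card_setC_basis basis_card_d M_rep Bb).
  by rewrite card_image_set.
by apply: rdvd_minor_ideal_image c_incr _; rewrite cBE; apply: gI.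
Qed.

End MaximalMinors.

Unset Implicit Arguments.

Theorem mainTheorem1 (k : fieldType) (n m d : nat)
  (f : 'I_m -> {mpoly k[n]}) (P : prime_idealr {mpoly k[n]}) :
  [pchar k] =i pred0 ->
  (forall g, g \in P <-> gen_ideal f g) ->
  (exists B, is_basis (alg_indep P) B /\ #|B| = d) ->
  represents (frac_mx P (jacobian f)) (dual_indep (alg_indep P)) ->
  let J := jacobian f in
  let NM := fun p : 'I_n -> k =>
      vanishes (fun g => g \in P) p /\
      ~ represents (eval_mx J p) (dual_indep (alg_indep P)) in
  let I := fun g : {mpoly k[n]} =>
      forall B, is_basis (alg_indep P) B ->
        minor_ideal (n - d) (colsubset J (~: B)) g in
  let I' := fun g : {mpoly k[n]} =>
      forall S : {set 'I_n},
        ~ (forall h, minor_ideal (n - d) (colsubset J S) h -> h \in P) ->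
        minor_ideal (n - d) (colsubset J S) g in
  let is_lcm := fun h : {mpoly k[n]} =>
      (forall c : {ffun 'I_m -> 'I_n}, increasing c ->
         maxminor J c \notin P -> rdvd (maxminor J c) h) /\
      (forall q, (forall c : {ffun 'I_m -> 'I_n}, increasing c ->
         maxminor J c \notin P -> rdvd (maxminor J c) q) -> rdvd h q) in
  (forall p, NM p <-> vanishes (fun g => g \in P) p /\ vanishes I p) /\
  (forall p, NM p <-> vanishes (fun g => g \in P) p /\ vanishes I' p) /\
  (m = (n - d)%N ->
     (exists h, is_lcm h) /\
     (forall h, is_lcm h ->
        (forall g, I g <-> rdvd h g) /\ (forall g, I' g <-> rdvd h g))).
Proof.
move=> _ _ basis_card_d J_rep J NM I I' is_lcm.
split; first exact: nonmatroidal_locus_basis basis_card_d J_rep.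
split; first exact: nonmatroidal_locus_nonzero basis_card_d J_rep.
move=> mE; subst m; split; first exact: maxminor_lcm_exists.
move=> h [hdvd hmin]; split=> g; rewrite (rdvd_maxminor_lcm hdvd hmin).
  exact: basis_minor_idealE basis_card_d J_rep g.
exact: nonzero_minor_idealE.
Qed.
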